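(* Let $3\leq d\leq k$ be integers. Then in every connected $k$-colouring of the edges of $K_n$ there is a copy of $K_d$ whose edges receive at least $d$ distinct colours. Moreover, for all sufficiently large $n$ there exists a connected $k$-colouring of the edges of $K_n$ in which no copy of $K_d$ has edges of more than $d$ distinct colours.
   Context: A $k$-colouring of the edges of the complete graph $K_n$ (colours from $\{1,\dots,k\}$) is called connected if for each colour $i$ the edges of colour $i$ form a connected spanning subgraph of $K_n$. *)

From mathcomp Require Import all_boot.
Set Implicit Arguments. Unset Strict Implicit. Unset Printing Implicit Defensive.

(* An edge colouring of K_n with colours 'I_k (= {1,...,k} shifted to 0..k-1):
   a function c on ordered pairs of vertices that is symmetric; the values
   on the diagonal (x = x) are irrelevant. *)
Definition sym_colouring (n k : nat) (c : 'I_n -> 'I_n -> 'I_k) : Prop :=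
  forall x y, c x y = c y x.

Definition colour_rel (n k : nat) (c : 'I_n -> 'I_n -> 'I_k) (i : 'I_k) : rel 'I_n :=
  fun x y => (x != y) && (c x y == i).

Definition connected_colouring (n k : nat) (c : 'I_n -> 'I_n -> 'I_k) : Prop :=
  sym_colouring c /\ forall (i : 'I_k) (x y : 'I_n), connect (colour_rel c i) x y.

Definition edge_colours (n k : nat) (c : 'I_n -> 'I_n -> 'I_k) (S : {set 'I_n})
  : {set 'I_k} :=
  [set c x y | x in S, y in S & x != y].

From mathcomp Require Import all_boot zify.
Set Implicit Arguments. Unset Strict Implicit. Unset Printing Implicit Defensive.

(* Lower bound: suppose three colours a, b, e are each connected on a vertex set V
   spanning no rainbow triangle. Then deleting a vertex x keeps a connected: every
   vertex outside an a-component of V - x sees that component in a single colour,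
   so if V - x had two a-components, an e-edge leaving the a-component of a
   b-neighbour w of x would force b = e. Shrinking V to two vertices forces a = b,
   hence every connected colouring with at least three colours has a rainbow
   triangle. A clique of t < k vertices with t colours grows by the outer endpoint
   of an edge of a missing colour leaving it.
   Upper bound: vertices 2i and 2i+1 own colour i, an edge between vertices of equal
   parity gets the smaller owner and otherwise the larger one, so every edge has the
   colour owned by one of its endpoints while vertex 2i is joined in colour i to all
   of its colour class. *)

Lemma connect_exit (T : finType) (e : rel T) (P : {pred T}) x y :
  connect e x y -> x \in P -> y \notin P ->
  exists u v, [/\ u \in P, v \notin P & e u v].
Proof.
case/connectP=> p + ->; elim: p x => [|z p IH] x /=; first by move=> _ ->.
case/andP=> exz ezp Px; case Pz: (z \in P); first exact: IH.
by move=> _; exists x, z; rewrite Pz.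
Qed.

Lemma connect_neq_edge (T : finType) (e : rel T) x y :
  connect e x y -> x != y -> exists z, e x z.
Proof.
case/connectP=> [[|z p]] /= + ->; first by rewrite eqxx.
by case/andP=> exz _ _; exists z.
Qed.

Lemma card_set3 (T : finType) (u v w : T) :
  u != v -> v != w -> u != w -> #|[set u; v; w]| = 3.
Proof.
move=> uv vw uw; rewrite -setUA cardsU1 cards2 vw !inE.
by rewrite (negbTE uv) (negbTE uw).
Qed.

Section Colouring.

Variables (n k : nat) (c : 'I_n -> 'I_n -> 'I_k).

Lemma mem_edge_colours (S : {set 'I_n}) x y :
  x \in S -> y \in S -> x != y -> c x y \in edge_colours c S.
Proof. by move=> xS yS xy; apply: imset2_f; rewrite // inE yS xy. Qed.

Lemma edge_coloursS (S T : {set 'I_n}) :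
  S \subset T -> edge_colours c S \subset edge_colours c T.
Proof.
move=> /subsetP sST; apply/subsetP => _ /imset2P [x y xS + ->].
by rewrite inE => /andP [yS xy]; apply: mem_edge_colours; rewrite ?sST.
Qed.

Definition colour_rel_in (V : {set 'I_n}) (i : 'I_k) : rel 'I_n :=
  [rel u v | [&& u \in V, v \in V & colour_rel c i u v]].

Definition connected_in (V : {set 'I_n}) (i : 'I_k) :=
  {in V &, forall u v, connect (colour_rel_in V i) u v}.

Definition rainbow u v w := [&& c u v != c u w, c v w != c u v & c v w != c u w].

Definition has_rainbow (V : {set 'I_n}) :=
  [exists u in V, exists v in V, exists w in V, rainbow u v w].

Lemma has_rainbowS (V W : {set 'I_n}) :
  V \subset W -> has_rainbow V -> has_rainbow W.
Proof.
move=> /subsetP sVW /exists_inP [u uV /exists_inP [v vV /exists_inP [w wV r]]].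
apply/exists_inP; exists u; first exact: sVW.
apply/exists_inP; exists v; first exact: sVW.
by apply/exists_inP; exists w; first exact: sVW.
Qed.

Lemma no_rainbow_colour (V : {set 'I_n}) u v w :
  ~~ has_rainbow V -> u \in V -> v \in V -> w \in V ->
  c u v != c u w -> c v w != c u v -> c v w = c u w.
Proof.
move=> noRB uV vV wV uvw vwu; apply/eqP/negPn/negP => vwuw; case/negP: noRB.
apply/exists_inP; exists u => //; apply/exists_inP; exists v => //.
by apply/exists_inP; exists w => //; apply/and3P.
Qed.

Hypothesis c_sym : sym_colouring c.

Lemma colour_rel_sym i : symmetric (colour_rel c i).
Proof. by move=> u v; rewrite /colour_rel eq_sym c_sym. Qed.

Lemma colour_rel_in_sym V i : symmetric (colour_rel_in V i).
Proof. by move=> u v; rewrite /colour_rel_in /= colour_rel_sym andbCA. Qed.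

Lemma rainbow_neq u v w : rainbow u v w -> [/\ u != v, v != w & u != w].
Proof.
case/and3P=> uvw vwu vwuw; split.
- by apply: contraNneq vwuw => ->.
- by apply: contraNneq uvw => ->.
- by apply: contraNneq vwu => ->; rewrite c_sym.
Qed.

Section DeleteVertex.

Variables (V : {set 'I_n}) (x : 'I_n) (a b e : 'I_k).
Hypotheses (xV : x \in V) (noRB : ~~ has_rainbow V).
Hypotheses (ab : a != b) (ae : a != e) (be : b != e).
Hypotheses (a_conn : connected_in V a) (b_conn : connected_in V b)
  (e_conn : connected_in V e).

Local Notation V' := (V :\ x).
Local Notation R := (connect (colour_rel_in V' a)).

Let R_sym u v : R u v = R v u.
Proof. exact/sym_connect_sym/colour_rel_in_sym. Qed.

Let R_trans v u w : R u v -> R v w -> R u w.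
Proof. exact: connect_trans. Qed.

Let R_edge u v : u \in V' -> v \in V' -> u != v -> c u v = a -> R u v.
Proof.
move=> uV vV uv cuv; apply: connect1.
by apply/and3P; split; rewrite // /colour_rel uv cuv /=.
Qed.

Let R_in u v : R u v -> u \in V' -> v \in V'.
Proof.
have cl : closed (colour_rel_in V' a) V' by move=> p q /and3P [-> -> _].
by move/(closed_connect cl) => ->.
Qed.

Let in_V u : u \in V' -> u \in V.
Proof. exact/subsetP/subD1set. Qed.

Let not_R_colour u w : u \in V' -> w \in V' -> ~~ R u w -> c u w != a.
Proof.
move=> uV wV; apply: contraNneq => cuw; have [-> //|uw] := eqVneq u w.
exact: R_edge.
Qed.

(* An [a]-edge [p q] away from [w] makes [p q w] rainbow unless [c p w = c q w]. *)
Let R_colour_const u u' w :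
  u \in V' -> w \in V' -> R u u' -> ~~ R u w -> c u w = c u' w.
Proof.
move=> uV wV uu' nuw.
pose P := [pred v | (c v w == c u w) || R v w].
suff cl : closed (colour_rel_in V' a) P.
  have nu'w : ~~ R u' w by apply: contra nuw; apply: R_trans.
  move: (closed_connect cl uu').
  by rewrite !inE eqxx (negbTE nu'w) orbF => /esym /eqP.
move=> p q pq; have qp : R q p by rewrite R_sym connect1.
case/and3P: (pq) => pV qV /andP [_ /eqP cpq].
have [pw|npw] := boolP (R p w); first by rewrite !inE pw (R_trans qp pw) !orbT.
have nqw : ~~ R q w by apply: contra npw; apply: R_trans; apply: connect1.
rewrite !inE (negbTE npw) (negbTE nqw) !orbF.
rewrite (@no_rainbow_colour V p q w) ?in_V // cpq.
- by rewrite eq_sym not_R_colour.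
- exact: not_R_colour.
Qed.

Let a_edge_from_x u v :
  u \in V' -> v \in V' -> ~~ R u v -> exists p, [/\ p \in V', R u p & c x p = a].
Proof.
move=> uV vV nuv.
have [p [q [up nuq]]] :=
  connect_exit (P := R u) (a_conn (in_V uV) (in_V vV)) (connect0 _ _) nuv.
case/and3P=> _ qV /andP [pq /eqP cpq]; have pV' := R_in up uV.
have [qx|qx] := eqVneq q x; first by exists p; split; rewrite // -qx c_sym.
have qV' : q \in V' by rewrite !inE qx.
by case/negP: nuq; apply: R_trans up _; apply: R_edge.
Qed.

Lemma connected_in_delete : connected_in V' a.
Proof.
move=> y z yV zV; apply/idPn => nyz.
have xy : x != y by move: yV; rewrite !inE eq_sym => /andP [].
have [w /and3P [_ wV /andP [xw /eqP cxw]]] :=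
  connect_neq_edge (b_conn xV (in_V yV)) xy.
have wV' : w \in V' by rewrite !inE eq_sym xw.
have [v vV nwv] : exists2 v, v \in V' & ~~ R w v.
  have [wy|] := boolP (R w y); last by exists y.
  by exists z => //; apply: contra nyz; apply: R_trans; rewrite R_sym.
have b_to_w u : u \in V' -> c x u = a -> ~~ R w u -> c u w = b.
  move=> uV cxu nwu; rewrite -cxw; apply: (no_rainbow_colour noRB);
    rewrite ?xV ?in_V // ?cxu ?cxw //.
  by apply: not_R_colour; rewrite // R_sym.
have [p [q [wp nwq]]] :=
  connect_exit (P := R w) (e_conn (in_V wV') (in_V vV)) (connect0 _ _) nwv.
case/and3P=> _ qV /andP [_ /eqP cpq]; have pV := R_in wp wV'.
have [qx|qx] := eqVneq q x.
  have nvw : ~~ R v w by rewrite R_sym.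
  have [u [uV vu cxu]] := a_edge_from_x vV wV' nvw.
  have nwu : ~~ R w u by apply: contra nwv => wu; apply: R_trans wu _; rewrite R_sym.
  have nup : ~~ R u p by apply: contra nwu => up; apply: R_trans wp _; rewrite R_sym.
  have cup : c u p = c x p.
    apply: (no_rainbow_colour noRB); rewrite ?xV ?in_V // cxu.
    - by rewrite c_sym -qx cpq.
    - exact: not_R_colour.
  move: be; rewrite -(b_to_w u uV cxu nwu) c_sym (R_colour_const wV' uV wp nwu).
  by rewrite c_sym cup c_sym -qx cpq eqxx.
have qV' : q \in V' by rewrite !inE qx.
have nqw : ~~ R q w by rewrite R_sym.
have [u [uV qu cxu]] := a_edge_from_x qV' wV' nqw.
have nwu : ~~ R w u by apply: contra nwq => wu; apply: R_trans wu _; rewrite R_sym.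
move: be; rewrite -(b_to_w u uV cxu nwu) -(R_colour_const qV' wV' qu nqw).
by rewrite c_sym (R_colour_const wV' qV' wp nwq) cpq eqxx.
Qed.

End DeleteVertex.

Lemma connected_in2_colour (V : {set 'I_n}) i y z :
  #|V| = 2 -> y \in V -> z \in V -> y != z -> connected_in V i -> c y z = i.
Proof.
move=> V2 yV zV yz conn.
have [w /and3P [_ wV /andP [yw /eqP <-]]] := connect_neq_edge (conn y z yV zV) yz.
have [-> //|zw] := eqVneq z w.
have : #|[set y; z; w]| <= #|V|.
  by apply/subset_leq_card/subsetP => v; rewrite !inE => /orP [/orP [] | ] /eqP ->.
by rewrite card_set3 ?V2.
Qed.

Lemma has_rainbow_connected (V : {set 'I_n}) a b e :
  1 < #|V| -> a != b -> a != e -> b != e ->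
  connected_in V a -> connected_in V b -> connected_in V e -> has_rainbow V.
Proof.
have [m] := ubnP #|V|; elim: m V => // m IH V /ltnSE leVm V1 ab ae be ca cb ce.
have [V2|V2] := eqVneq #|V| 2.
  have /cards2P [y [z [yz defV]]] : #|V| == 2 by rewrite V2.
  have yV : y \in V by rewrite defV !inE eqxx.
  have zV : z \in V by rewrite defV !inE eqxx orbT.
  move: ab; rewrite -(connected_in2_colour V2 yV zV yz ca).
  by rewrite (connected_in2_colour V2 yV zV yz cb) eqxx.
have [x xV] : exists x, x \in V by apply/card_gt0P; apply: ltnW.
have szV : #|V| = #|V :\ x|.+1 by rewrite (cardsD1 x V) xV.
have [//|noRB] := boolP (has_rainbow V).
suff : has_rainbow (V :\ x).
  by move/(has_rainbowS (subD1set V x)); rewrite (negbTE noRB).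
apply: (IH _ _ _ ab ae be); rewrite -?szV //; first by move: V1 V2; rewrite szV; lia.
- exact: (connected_in_delete xV noRB ab ae be ca cb ce).
- by apply: (connected_in_delete xV noRB _ be ae cb ca ce); rewrite eq_sym.
- by apply: (connected_in_delete xV noRB _ _ ab ce ca cb); rewrite eq_sym.
Qed.

End Colouring.

Section ConnectedColouring.

Variables (n k : nat) (c : 'I_n -> 'I_n -> 'I_k).
Hypotheses (n_gt1 : 1 < n) (c_conn : connected_colouring c).

Lemma colours_lt_vertices : k < n.
Proof.
have [_ conn] := c_conn.
pose x : 'I_n := Ordinal (ltnW n_gt1); pose y : 'I_n := Ordinal n_gt1.
have : [set: 'I_k] \subset [set c x w | w in [set~ x]].
  apply/subsetP => i _.
  have [w /andP [xw /eqP <-]] := connect_neq_edge (conn i x y) isT.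
  by apply: imset_f; rewrite !inE eq_sym.
move/subset_leq_card/leq_trans/(_ (leq_imset_card _ _)).
by rewrite cardsT cardsC1 !card_ord; case: n n_gt1.
Qed.

Lemma colourful_triangle :
  2 < k -> exists S : {set 'I_n}, #|S| = 3 /\ 3 <= #|edge_colours c S|.
Proof.
move=> k_gt2; have [c_sym conn] := c_conn.
have connT i : connected_in c [set: 'I_n] i.
  move=> u v _ _; rewrite (@eq_connect _ _ (colour_rel c i)) // => p q.
  by rewrite /colour_rel_in /= !in_setT.
pose i0 : 'I_k := Ordinal (ltnW (ltnW k_gt2)); pose i1 : 'I_k := Ordinal (ltnW k_gt2).
pose i2 : 'I_k := Ordinal k_gt2.
have : has_rainbow c [set: 'I_n].
  apply: (has_rainbow_connected c_sym _ _ _ _ (connT i0) (connT i1) (connT i2));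
    by rewrite ?cardsT ?card_ord.
case/exists_inP=> u _ /exists_inP [v _ /exists_inP [w _ uvw]].
have [uv vw uw] := rainbow_neq c_sym uvw; case/and3P: uvw => cuv cvw cvu.
exists [set u; v; w]; split; first exact: card_set3.
rewrite -(@card_set3 _ (c v w) (c u v) (c u w)) //.
by apply/subset_leq_card/subsetP => i; rewrite !inE => /orP [/orP [] | ] /eqP ->;
  apply: mem_edge_colours; rewrite ?inE ?eqxx ?orbT.
Qed.

Lemma colourful_extend (S : {set 'I_n}) t :
  0 < t -> t < k -> #|S| = t -> t <= #|edge_colours c S| ->
  exists S' : {set 'I_n}, #|S'| = t.+1 /\ t.+1 <= #|edge_colours c S'|.
Proof.
move=> t_gt0 t_lt_k szS colS; have [_ conn] := c_conn.
have /card_gt0P [v] : 0 < #|~: S|.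
  by move: (cardsC S) colours_lt_vertices; rewrite szS card_ord; lia.
rewrite inE => vS.
have [colS'|colSt] := ltnP t #|edge_colours c S|.
  exists (v |: S); rewrite cardsU1 vS szS; split => //.
  exact/(leq_trans colS')/subset_leq_card/edge_coloursS/subsetUr.
have /card_gt0P [i] : 0 < #|~: edge_colours c S|.
  by move: (cardsC (edge_colours c S)); rewrite card_ord; lia.
rewrite inE => iS; have /card_gt0P [u uS] : 0 < #|S| by rewrite szS.
have [p [q [pS qS /andP [pq /eqP cpq]]]] := connect_exit (conn i u v) uS vS.
exists (q |: S); rewrite cardsU1 qS szS; split => //.
have <- : #|i |: edge_colours c S| = t.+1.
  by rewrite cardsU1 iS add1n; apply/eqP; rewrite eqSS eqn_leq colSt colS.
apply/subset_leq_card; rewrite subUset sub1set edge_coloursS ?subsetUr // andbT.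
by rewrite -cpq mem_edge_colours // !inE ?eqxx ?pS ?orbT.
Qed.

Lemma colourful_clique d :
  3 <= d -> d <= k -> exists S : {set 'I_n}, #|S| = d /\ d <= #|edge_colours c S|.
Proof.
elim: d => // d IH; rewrite leq_eqVlt => /orP [/eqP <- | d_gt2] dk.
  exact: colourful_triangle.
have [S [szS colS]] := IH d_gt2 (ltnW dk).
exact: colourful_extend (ltnW (ltnW d_gt2)) dk szS colS.
Qed.

End ConnectedColouring.

Section ParityColouring.

Variables (n k : nat).
Hypothesis n_ge : k.+1.*2 <= n.

Definition owner (x : nat) := minn x./2 k.

Definition parity_colour (x y : nat) :=
  if odd x == odd y then minn (owner x) (owner y) else maxn (owner x) (owner y).

Definition parity_colouring (x y : 'I_n) : 'I_k.+1 := inord (parity_colour x y).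

Lemma parity_colouringE x y : parity_colouring x y = parity_colour x y :> nat.
Proof. by rewrite inordK // /parity_colour /owner; case: ifP => _; lia. Qed.

Lemma parity_colour_owner x y :
  parity_colour x y = owner x \/ parity_colour x y = owner y.
Proof. by rewrite /parity_colour; case: ifP => _; lia. Qed.

Lemma parity_colour_edge (i : 'I_k.+1) (x y : 'I_n) :
  val x != val y -> parity_colour x y = i -> colour_rel parity_colouring i x y.
Proof.
by move=> xy cxy; rewrite /colour_rel xy; apply/eqP/val_inj; rewrite /= parity_colouringE.
Qed.

Lemma parity_colouring_hub (i : 'I_k.+1) (x : 'I_n) (hi : i.*2 < n) :
  connect (colour_rel parity_colouring i) (Ordinal hi) x.
Proof.
have ik := ltn_ord i.
have near (y : 'I_n) :
    owner y = i -> connect (colour_rel parity_colouring i) (Ordinal hi) y.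
  move=> oy; have [<- //|hy] := eqVneq (Ordinal hi) y.
  apply/connect1/parity_colour_edge; first by move: hy; rewrite -(inj_eq val_inj).
  by move: oy; rewrite /parity_colour /owner /=; case: ifP => _; lia.
have [|ox] := eqVneq (owner x) i; first exact: near.
(* Its parity is chosen so that the min/max rule gives the edge to [x] colour [i]. *)
pose t := i.*2 + (odd x == (i < owner x)).
have tn : t < n by rewrite /t; lia.
apply: (connect_trans (near (Ordinal tn) _)); first by rewrite /owner /t /=; lia.
apply/connect1/parity_colour_edge; rewrite /= /t; first by move: ox; rewrite /owner; lia.
by move: ox; rewrite /parity_colour /owner; case: ifP; lia.
Qed.

Lemma parity_colouring_connected : connected_colouring parity_colouring.
Proof.
have c_sym : sym_colouring parity_colouring.
  move=> x y; apply: val_inj.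
  by rewrite /= !parity_colouringE /parity_colour eq_sym minnC maxnC.
split=> // i x y; have hi : i.*2 < n by have := ltn_ord i; lia.
apply: connect_trans (parity_colouring_hub y hi).
rewrite (sym_connect_sym (colour_rel_sym c_sym i)); exact: parity_colouring_hub.
Qed.

Lemma card_edge_colours_parity (S : {set 'I_n}) :
  #|edge_colours parity_colouring S| <= #|S|.
Proof.
apply: leq_trans (leq_imset_card (fun x : 'I_n => inord (owner x) : 'I_k.+1) S).
apply/subset_leq_card/subsetP => _ /imset2P [x y xS + ->]; rewrite inE => /andP [yS _].
apply/imsetP; rewrite /parity_colouring.
by case: (parity_colour_owner x y) => ->; [exists x | exists y].
Qed.

End ParityColouring.

Theorem proposition14 (d k : nat) :
  3 <= d -> d <= k ->
  (forall (n : nat) (c : 'I_n -> 'I_n -> 'I_k),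
      2 <= n -> connected_colouring c ->
      exists S : {set 'I_n}, #|S| = d /\ d <= #|edge_colours c S|)
  /\
  (exists N : nat, forall n : nat, N <= n ->
      exists c : 'I_n -> 'I_n -> 'I_k,
        connected_colouring c /\
        forall S : {set 'I_n}, #|S| = d -> #|edge_colours c S| <= d).
Proof.
move=> d_ge3 d_le_k; split=> [n c n_gt1 c_conn|].
  exact: colourful_clique.
case: k d_le_k => [|k] d_le_k; first by case: d d_ge3 d_le_k.
exists k.+1.*2 => n n_ge; exists (@parity_colouring n k); split.
  exact: parity_colouring_connected.
by move=> S <-; apply: card_edge_colours_parity.
Qed.
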